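(* Let $\kappa>0$ and define, for $\alpha>0$, $$g_\kappa(\alpha)=1-\exp\!\Big(-\big(\kappa\,\Gamma(\tfrac{1}{\alpha}+1)\big)^{\alpha}\Big).$$ (i) If $\kappa\le 1$, then $$\inf_{\alpha\in(0,\infty)} g_\kappa(\alpha)=\lim_{\alpha\to+\infty} g_\kappa(\alpha)=\begin{cases}0,&\kappa<1,\\ 1-e^{-e^{-\gamma}},&\kappa=1,\end{cases}$$ where $\gamma=\sum_{n=1}^\infty\big[\frac1n-\ln(1+\frac1n)\big]$ is Euler's constant. (ii) If $\kappa>1$, then the function $\varphi_\kappa(x):=(x-1)\psi(x)-\ln(\kappa\Gamma(x))$ has a unique zero $x_0(\kappa)$ on $(1,\infty)$, and $$\min_{\alpha\in(0,\infty)} g_\kappa(\alpha)=g_\kappa(\alpha_0(\kappa)),\qquad \alpha_0(\kappa)=\frac{1}{x_0(\kappa)-1}.$$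
   Context: $\Gamma$ denotes the Gamma function and $\psi=\Gamma'/\Gamma$ the digamma function. Interpretation: if $X$ is a Weibull random variable with parameters $\alpha>0,\theta>0$, i.e. with density $f(x)=\frac{\alpha}{\theta}x^{\alpha-1}e^{-x^\alpha/\theta}$ for $x>0$, then $EX=\theta^{1/\alpha}\Gamma(\frac1\alpha+1)$ and $P(X\le\kappa EX)=g_\kappa(\alpha)$ (independent of $\theta$). *)

From Stdlib Require Import Reals.
From Coquelicot Require Import Coquelicot.
Open Scope R_scope.

Definition Gamma (x : R) : R :=
  RInt_gen (fun t => Rpower t (x - 1) * exp (- t))
           (at_right 0) (Rbar_locally p_infty).

Definition digamma (x : R) : R := Derive Gamma x / Gamma x.

Definition euler_gamma : R :=
  Series (fun n : nat => / INR (S n) - ln (1 + / INR (S n))).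

Definition g (kappa alpha : R) : R :=
  1 - exp (- Rpower (kappa * Gamma (/ alpha + 1)) alpha).

Definition phi (kappa x : R) : R :=
  (x - 1) * digamma x - ln (kappa * Gamma x).

From Stdlib Require Import Reals Lra Lia Factorial ZArith.
From Coquelicot Require Import Coquelicot.
Open Scope R_scope.

(* Write LG = ln o Gamma, c = ln kappa and
     LG_ratio c x = (c + LG x) / (x - 1),   gumbel_cdf E = 1 - exp (- exp E).
   Then g kappa alpha = gumbel_cdf (LG_ratio c (1 + 1/alpha)) with gumbel_cdf
   increasing, and phi kappa x is the numerator of the derivative of
   LG_ratio c at x.  Both parts thus reduce to properties of LG, all derived
   here from the integral defining Gamma:
   1. The improper integral converges for x > 0, Gamma 1 = 1,
      Gamma (x+1) = x Gamma x and Gamma x > 0.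
   2. Integrating the convexity of exp (the pointwise form of Hölder's
      inequality) gives the log-convexity of Gamma.
   3. Log-convexity and the functional equation give the Bohr-Mollerup
      bounds -gamma x <= LG (1+x) <= -gamma x + o(x), so
      alpha LG (1 + 1/alpha) -> -gamma; together with LG (1+x) <= x ln 2
      this yields part (i).
   4. A convex function whose right and left difference quotients at a point
      come together is differentiable there; the functional equation forces
      this for LG, whose derivative is therefore the digamma function.
   5. By the tangent-line inequality, the zeros of phi kappa on (1, +oo) are
      global minimisers of LG_ratio (ln kappa) on (1, +oo); strict midpoint
      convexity of LG makes such a zero unique, and the minimum of the ratio
      on a compact interval, at whose ends it exceeds its value ln kappa at 2,
      is one. *)

Lemma ln_le_sub_1 y : 0 < y -> ln y <= y - 1.
Proof. intros Hy. generalize (exp_ineq1_le (ln y)). rewrite exp_ln; lra. Qed.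

Lemma ln_ge_1_sub_inv z : 0 < z -> 1 - / z <= ln z.
Proof.
  intros Hz. generalize (ln_le_sub_1 (/ z) ltac:(apply Rinv_0_lt_compat; auto)).
  rewrite ln_Rinv by auto. lra.
Qed.

Lemma ln_1p_le y : 0 <= y -> ln (1 + y) <= y.
Proof. intros Hy. generalize (ln_le_sub_1 (1 + y) ltac:(lra)); lra. Qed.

Lemma ln_1p_ge y : 0 <= y -> y / (1 + y) <= ln (1 + y).
Proof.
  intros Hy. generalize (ln_ge_1_sub_inv (1 + y) ltac:(lra)).
  replace (1 - / (1 + y)) with (y / (1 + y)) by (field; lra). auto.
Qed.

Lemma exp_le_compat x y : x <= y -> exp x <= exp y.
Proof. intros [H|H]. left; apply exp_increasing; auto. subst; lra. Qed.

(* Two-point convexity of exp; integrated, it becomes Hölder's inequality. *)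
Lemma exp_convex l p q : 0 <= l <= 1 ->
  exp (l * p + (1 - l) * q) <= l * exp p + (1 - l) * exp q.
Proof.
  intros Hl. set (m := l * p + (1 - l) * q).
  assert (Ep : exp p = exp m * exp (p - m)) by (rewrite <- exp_plus; f_equal; ring).
  assert (Eq : exp q = exp m * exp (q - m)) by (rewrite <- exp_plus; f_equal; ring).
  (* both exponentials lie above the tangent of exp at m *)
  generalize (exp_ineq1_le (p - m)) (exp_ineq1_le (q - m)) (exp_pos m). intros Tp Tq Hm.
  rewrite Ep, Eq.
  assert (l * (exp m * exp (p - m)) >= l * (exp m * (1 + (p - m)))).
  { apply Rle_ge, Rmult_le_compat_l; [lra|]. apply Rmult_le_compat_l; lra. }
  assert ((1 - l) * (exp m * exp (q - m)) >= (1 - l) * (exp m * (1 + (q - m)))).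
  { apply Rle_ge, Rmult_le_compat_l; [lra|]. apply Rmult_le_compat_l; lra. }
  assert (l * (exp m * (1 + (p - m))) + (1 - l) * (exp m * (1 + (q - m))) = exp m)
    by (unfold m; ring).
  lra.
Qed.

Lemma div_le_cross u v p q : 0 < p -> 0 < q -> u * q <= v * p -> u / p <= v / q.
Proof.
  intros Hp Hq H. apply (Rmult_le_reg_r (p * q)). nra.
  replace (u / p * (p * q)) with (u * q) by (field; lra).
  replace (v / q * (p * q)) with (v * p) by (field; lra). auto.
Qed.

Lemma nat_large A : exists m : nat, A < INR (S m).
Proof.
  destruct (archimed (Rmax A 0)) as [H1 H2].
  assert (H0 : 0 <= Rmax A 0) by apply Rmax_r.
  assert (Hup : (0 < up (Rmax A 0))%Z) by (apply lt_0_IZR; lra).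
  exists (Z.to_nat (up (Rmax A 0))).
  rewrite S_INR, INR_IZR_INZ, Z2Nat.id by lia.
  generalize (Rmax_l A 0). lra.
Qed.

Lemma locally_pos z : 0 < z -> locally z (fun y => 0 < y).
Proof.
  intros Hz. exists (mkposreal z Hz). intros y Hy.
  change (Rabs (y - z) < z) in Hy. apply Rabs_def2 in Hy. lra.
Qed.

Lemma eventually_0_infty (P : R * R -> Prop) :
  (forall a b, 0 < a < 1 -> 1 < b -> P (a, b)) ->
  filter_prod (at_right 0) (Rbar_locally p_infty) P.
Proof.
  intros H. apply Filter_prod with (fun a => 0 < a < 1) (fun b => 1 < b).
  - exists (mkposreal 1 Rlt_0_1). intros y Hy Hy0. split; auto.
    change (Rabs (y - 0) < 1) in Hy. rewrite Rminus_0_r, Rabs_right in Hy; lra.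
  - exists 1. auto.
  - intros a b Ha Hb. apply H; auto.
Qed.

Lemma proper_at_right_0 : ProperFilter' (at_right 0).
Proof. apply Proper_StrongProper, at_right_proper_filter. Qed.

Lemma proper_p_infty : ProperFilter' (Rbar_locally p_infty).
Proof. apply Proper_StrongProper, Rbar_locally_filter. Qed.

Lemma is_RInt_gen_0_infty_unique (f : R -> R) (l1 l2 : R) :
  is_RInt_gen f (at_right 0) (Rbar_locally p_infty) l1 ->
  is_RInt_gen f (at_right 0) (Rbar_locally p_infty) l2 -> l1 = l2.
Proof.
  intros H1 H2.
  rewrite <- (is_RInt_gen_unique (V:=R_CompleteNormedModule)
               (FFa:=proper_at_right_0) (FFb:=proper_p_infty) _ _ H1).
  exact (is_RInt_gen_unique (V:=R_CompleteNormedModule)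
           (FFa:=proper_at_right_0) (FFb:=proper_p_infty) _ _ H2).
Qed.

Lemma is_RInt_gen_antiderivative (F f : R -> R) (la lb : R) :
  (forall t, 0 < t -> is_derive F t (f t)) ->
  (forall t, 0 < t -> continuous f t) ->
  filterlim F (at_right 0) (locally la) ->
  filterlim F (Rbar_locally p_infty) (locally lb) ->
  is_RInt_gen f (at_right 0) (Rbar_locally p_infty) (lb - la).
Proof.
  intros HF Hf L0 Linf.
  assert (HD : forall t, 0 < t -> Derive F t = f t) by (intros; apply is_derive_unique; auto).
  apply (is_RInt_gen_ext (Derive F)).
  { apply eventually_0_infty. intros a b Ha Hb t Ht. simpl in Ht.
    rewrite Rmin_left in Ht by lra. apply HD; lra. }
  apply is_RInt_gen_Derive; auto.
  - apply eventually_0_infty. intros a b Ha Hb t Ht. simpl in Ht.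
    rewrite Rmin_left in Ht by lra. exists (f t). apply HF. lra.
  - apply eventually_0_infty. intros a b Ha Hb t Ht. simpl in Ht.
    rewrite Rmin_left in Ht by lra.
    apply (continuous_ext_loc _ f); [|apply Hf; lra].
    apply (filter_imp (fun y => 0 < y)); [|apply locally_pos; lra].
    intros y Hy. symmetry; apply HD; auto.
Qed.

Lemma lim_p_infty_0_of_exp_bound (F : R -> R) C : 0 < C ->
  (forall t, 1 <= t -> Rabs (F t) <= C * exp (- t / 2)) ->
  filterlim F (Rbar_locally p_infty) (locally 0).
Proof.
  intros HC HF. apply filterlim_locally. intros eps.
  exists (Rmax 1 (- 2 * ln (eps / C))). intros t Ht.
  change (Rabs (F t - 0) < eps). rewrite Rminus_0_r.
  assert (H1 : 1 <= t) by (generalize (Rmax_l 1 (- 2 * ln (eps / C))); lra).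
  assert (H2 : - 2 * ln (eps / C) < t) by (generalize (Rmax_r 1 (- 2 * ln (eps / C))); lra).
  assert (He : 0 < eps / C) by (apply Rdiv_lt_0_compat; [apply cond_pos| auto]).
  assert (H3 : exp (- t / 2) < eps / C).
  { rewrite <- (exp_ln (eps / C)) by auto. apply exp_increasing. lra. }
  apply Rle_lt_trans with (1 := HF t H1).
  apply (Rmult_lt_compat_l C) in H3; auto.
  replace (C * (eps / C)) with (pos eps) in H3 by (field; lra). auto.
Qed.

Lemma lim_at_right_0_of_Rpower_bound (F : R -> R) x : 0 < x ->
  (forall t, 0 < t -> Rabs (F t) <= Rpower t x) ->
  filterlim F (at_right 0) (locally 0).
Proof.
  intros Hx HF. apply filterlim_locally. intros eps.
  assert (Hd : 0 < exp (ln eps / x)) by apply exp_pos.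
  exists (mkposreal _ Hd). intros t Ht Ht0.
  change (Rabs (t - 0) < exp (ln eps / x)) in Ht. rewrite Rminus_0_r, Rabs_right in Ht by lra.
  change (Rabs (F t - 0) < eps). rewrite Rminus_0_r.
  apply Rle_lt_trans with (1 := HF t Ht0). unfold Rpower.
  rewrite <- (exp_ln eps) by apply cond_pos. apply exp_increasing.
  apply ln_increasing in Ht; auto. rewrite ln_exp in Ht.
  apply (Rmult_lt_compat_l x) in Ht; auto.
  replace (x * (ln eps / x)) with (ln eps) in Ht by (field; lra). lra.
Qed.

Section PositiveImproperIntegral.
Variable f : R -> R.
Hypothesis f_cont : forall t, 0 < t -> continuous f t.
Hypothesis f_nonneg : forall t, 0 < t -> 0 <= f t.

Lemma ex_RInt_pos a b : 0 < a -> a <= b -> ex_RInt f a b.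
Proof.
  intros Ha Hab. apply (ex_RInt_continuous (V:=R_CompleteNormedModule)). intros z Hz.
  apply f_cont. rewrite Rmin_left in Hz by lra. lra.
Qed.

Lemma RInt_pos_widen a b a' b' : 0 < a' -> a' <= a -> a <= b -> b <= b' ->
  RInt f a b <= RInt f a' b'.
Proof.
  intros H1 H2 H3 H4.
  rewrite <- (RInt_Chasles f a' a b') by (apply ex_RInt_pos; lra).
  rewrite <- (RInt_Chasles f a b b') by (apply ex_RInt_pos; lra).
  assert (0 <= RInt f a' a)
    by (apply RInt_ge_0; [lra|apply ex_RInt_pos; lra|intros; apply f_nonneg; lra]).
  assert (0 <= RInt f b b')
    by (apply RInt_ge_0; [lra|apply ex_RInt_pos; lra|intros; apply f_nonneg; lra]).
  change (RInt f a b <= RInt f a' a + (RInt f a b + RInt f b b')). lra.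
Qed.

(* The improper integral is the supremum of the integrals over [a, b]. *)
Lemma is_RInt_gen_of_bounded (B : R) :
  (forall a b, 0 < a <= 1 -> 1 <= b -> RInt f a b <= B) ->
  exists S, is_RInt_gen f (at_right 0) (Rbar_locally p_infty) S
    /\ (forall a b, 0 < a <= 1 -> 1 <= b -> RInt f a b <= S).
Proof.
  intros HB.
  set (E := fun y => exists a b, (0 < a <= 1 /\ 1 <= b) /\ y = RInt f a b).
  assert (bE : bound E) by (exists B; intros y [a [b [[Ha Hb] ->]]]; auto).
  assert (nE : exists y, E y) by (exists (RInt f 1 1), 1, 1; repeat split; lra).
  destruct (completeness E bE nE) as [S [S_ub S_least]].
  assert (S_bound : forall a b, 0 < a <= 1 -> 1 <= b -> RInt f a b <= S)
    by (intros a b Ha Hb; apply S_ub; exists a, b; auto).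
  exists S. split; auto.
  intros P [eps HP].
  (* some integral is eps-close to the supremum, and so are all larger ones *)
  assert (Hex : exists a0 b0, (0 < a0 <= 1 /\ 1 <= b0) /\ S - eps < RInt f a0 b0).
  { apply Classical_Prop.NNPP. intros H.
    assert (S <= S - eps) by (apply S_least; intros y [a [b [Hab ->]]];
      apply Rnot_lt_le; intros Hc; apply H; exists a, b; auto).
    generalize (cond_pos eps); lra. }
  destruct Hex as [a0 [b0 [[Ha0 Hb0] Hlt]]].
  apply Filter_prod with (fun a => 0 < a < a0) (fun b => b0 < b).
  - exists (mkposreal a0 (proj1 Ha0)). intros y Hy Hy0. split; auto.
    change (Rabs (y - 0) < a0) in Hy. rewrite Rminus_0_r, Rabs_right in Hy; lra.
  - exists b0. auto.
  - intros a b Ha Hb. simpl. exists (RInt f a b). split.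
    + apply (RInt_correct (V:=R_CompleteNormedModule)), ex_RInt_pos; lra.
    + apply HP. change (Rabs (RInt f a b - S) < eps).
      assert (RInt f a b <= S) by (apply S_bound; lra).
      assert (RInt f a0 b0 <= RInt f a b) by (apply RInt_pos_widen; lra).
      rewrite Rabs_left1; lra.
Qed.

End PositiveImproperIntegral.

Definition gamma_integrand (x t : R) : R := Rpower t (x - 1) * exp (- t).

Lemma gamma_integrand_exp x t : 0 < t -> gamma_integrand x t = exp ((x - 1) * ln t - t).
Proof. intros. unfold gamma_integrand, Rpower. rewrite <- exp_plus. f_equal; ring. Qed.

(* The integrand is positive (for t <= 0 as well, by the convention on Rpower). *)
Lemma gamma_integrand_pos x t : 0 < gamma_integrand x t.
Proof. unfold gamma_integrand, Rpower. apply Rmult_lt_0_compat; apply exp_pos. Qed.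

Lemma Rpower_continuous y t : 0 < t -> continuous (fun s => Rpower s y) t.
Proof.
  intros Ht. apply continuity_pt_filterlim. apply derivable_continuous_pt.
  exists (y * Rpower t (y - 1)). apply derivable_pt_lim_power; auto.
Qed.

Lemma gamma_integrand_continuous x t : 0 < t -> continuous (gamma_integrand x) t.
Proof.
  intros Ht. unfold gamma_integrand.
  apply (continuous_mult (fun s => Rpower s (x - 1)) (fun s => exp (- s))).
  - apply Rpower_continuous; auto.
  - apply (ex_derive_continuous (K:=R_AbsRing) (V:=R_NormedModule)). auto_derive. auto.
Qed.

(* Polynomial growth is absorbed by half of the exponential decay:
   y ln t <= t/2 + tail_const y for t >= 1. *)
Definition tail_const (y : R) : R := Rabs y * ln (2 * (Rabs y + 1)).

Lemma mul_ln_le_half y t : 1 <= t -> y * ln t <= t / 2 + tail_const y.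
Proof.
  intros Ht. unfold tail_const. set (m := 2 * (Rabs y + 1)).
  assert (Hy0 : 0 <= Rabs y) by apply Rabs_pos.
  assert (Hm : 0 < m) by (unfold m; lra).
  assert (Hl : 0 <= ln t) by (rewrite <- ln_1; apply ln_le; lra).
  assert (E : ln t = ln (t / m) + ln m).
  { rewrite <- ln_mult by (try apply Rdiv_lt_0_compat; lra). f_equal. field. lra. }
  assert (H1 := ln_le_sub_1 (t / m) ltac:(apply Rdiv_lt_0_compat; lra)).
  assert (H2 : y * ln t <= Rabs y * ln t) by (apply Rmult_le_compat_r; auto; apply Rle_abs).
  assert (H3 : Rabs y * (t / m) <= t / 2).
  { assert (Rabs y * / m <= / 2).
    { apply (Rmult_le_reg_r m); auto. rewrite Rmult_assoc, Rinv_l by lra. unfold m. lra. }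
    replace (Rabs y * (t / m)) with (t * (Rabs y * / m)) by (unfold Rdiv; ring). nra. }
  assert (H4 : Rabs y * ln t <= Rabs y * (t / m) + Rabs y * ln m).
  { rewrite E, <- Rmult_plus_distr_l. apply Rmult_le_compat_l; auto. lra. }
  lra.
Qed.

Lemma gamma_integrand_tail x t : 1 <= t ->
  gamma_integrand x t <= exp (tail_const (x - 1)) * exp (- t / 2).
Proof.
  intros Ht. rewrite gamma_integrand_exp by lra. rewrite <- exp_plus. apply exp_le_compat.
  generalize (mul_ln_le_half (x - 1) t Ht). lra.
Qed.

Lemma RInt_Rpower_to_1 x a : 0 < x -> 0 < a ->
  RInt (fun t => Rpower t (x - 1)) a 1 = (1 - Rpower a x) / x.
Proof.
  intros Hx Ha.
  assert (Hpos : forall z, Rmin a 1 <= z <= Rmax a 1 -> 0 < z).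
  { intros z Hz. destruct (Rle_dec a 1);
      [rewrite Rmin_left in Hz|rewrite Rmin_right in Hz]; lra. }
  assert (H : is_RInt (fun t => Rpower t (x - 1)) a 1
             (minus ((fun t => Rpower t x / x) 1) ((fun t => Rpower t x / x) a))).
  { apply (is_RInt_derive (V:=R_CompleteNormedModule) (fun t => Rpower t x / x)).
    - intros z Hz. apply is_derive_Reals.
      replace (Rpower z (x - 1)) with ((x * Rpower z (x - 1)) * / x) by (field; lra).
      apply derivable_pt_lim_scal_right. apply derivable_pt_lim_power, Hpos; auto.
    - intros z Hz. apply Rpower_continuous, Hpos; auto. }
  apply (is_RInt_unique (V:=R_CompleteNormedModule)) in H. rewrite H.
  unfold minus, plus, opp; simpl.
  replace (Rpower 1 x) with 1 by (unfold Rpower; rewrite ln_1, Rmult_0_r, exp_0; auto).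
  field. lra.
Qed.

Lemma RInt_exp_half C b : 1 <= b ->
  RInt (fun t => C * exp (- t / 2)) 1 b = 2 * C * (exp (- (1) / 2) - exp (- b / 2)).
Proof.
  intros Hb.
  assert (H : is_RInt (fun t => C * exp (- t / 2)) 1 b
             (minus ((fun t => - 2 * C * exp (- t / 2)) b) ((fun t => - 2 * C * exp (- t / 2)) 1))).
  { apply (is_RInt_derive (V:=R_CompleteNormedModule) (fun t => - 2 * C * exp (- t / 2))).
    - intros z Hz. auto_derive; auto. unfold Rdiv. field.
    - intros z Hz. apply (ex_derive_continuous (K:=R_AbsRing) (V:=R_NormedModule)).
      auto_derive. auto. }
  apply (is_RInt_unique (V:=R_CompleteNormedModule)) in H. rewrite H.
  unfold minus, plus, opp; simpl. ring.
Qed.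

(* Uniform bound: t^(x-1) on (0,1] and the exponential tail on [1,+oo). *)
Lemma gamma_integrand_RInt_bounded x a b : 0 < x -> 0 < a <= 1 -> 1 <= b ->
  RInt (gamma_integrand x) a b <= / x + 2 * exp (tail_const (x - 1)).
Proof.
  intros Hx Ha Hb.
  assert (Hc : forall t, 0 < t -> continuous (gamma_integrand x) t)
    by (intros; apply gamma_integrand_continuous; auto).
  assert (Hpos : forall t, 0 < t -> 0 <= gamma_integrand x t)
    by (intros; left; apply gamma_integrand_pos).
  rewrite <- (RInt_Chasles (gamma_integrand x) a 1 b) by (apply ex_RInt_pos; auto; lra).
  change (RInt (gamma_integrand x) a 1 + RInt (gamma_integrand x) 1 b
          <= / x + 2 * exp (tail_const (x - 1))).
  assert (H1 : RInt (gamma_integrand x) a 1 <= RInt (fun t => Rpower t (x - 1)) a 1).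
  { apply RInt_le; try lra.
    - apply ex_RInt_pos; auto; lra.
    - apply ex_RInt_pos; try lra. intros; apply Rpower_continuous; auto.
    - intros t Ht. unfold gamma_integrand.
      rewrite <- (Rmult_1_r (Rpower t (x - 1))) at 2.
      apply Rmult_le_compat_l. unfold Rpower; left; apply exp_pos.
      rewrite <- exp_0. apply exp_le_compat. lra. }
  rewrite RInt_Rpower_to_1 in H1 by lra.
  assert (H2 : RInt (gamma_integrand x) 1 b
               <= RInt (fun t => exp (tail_const (x - 1)) * exp (- t / 2)) 1 b).
  { apply RInt_le; try lra.
    - apply ex_RInt_pos; auto; lra.
    - apply (ex_RInt_continuous (V:=R_CompleteNormedModule)). intros.
      apply (ex_derive_continuous (K:=R_AbsRing) (V:=R_NormedModule)). auto_derive. auto.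
    - intros t Ht. apply gamma_integrand_tail. lra. }
  rewrite RInt_exp_half in H2 by lra.
  assert (0 < Rpower a x) by (unfold Rpower; apply exp_pos).
  assert (0 < exp (- b / 2)) by apply exp_pos.
  assert (exp (- (1) / 2) <= 1)
    by (generalize (exp_le_compat (- (1) / 2) 0 ltac:(lra)); rewrite exp_0; auto).
  assert (0 < exp (tail_const (x - 1))) by apply exp_pos.
  assert ((1 - Rpower a x) / x <= / x).
  { unfold Rdiv. rewrite <- (Rmult_1_l (/ x)) at 2. apply Rmult_le_compat_r.
    left; apply Rinv_0_lt_compat; auto. lra. }
  assert (2 * exp (tail_const (x - 1)) * (exp (- (1) / 2) - exp (- b / 2))
          <= 2 * exp (tail_const (x - 1))).
  { rewrite <- (Rmult_1_r (2 * exp (tail_const (x - 1)))) at 2. apply Rmult_le_compat_l; lra. }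
  lra.
Qed.

Lemma Gamma_spec x : 0 < x ->
  is_RInt_gen (gamma_integrand x) (at_right 0) (Rbar_locally p_infty) (Gamma x)
  /\ (forall a b, 0 < a <= 1 -> 1 <= b -> RInt (gamma_integrand x) a b <= Gamma x).
Proof.
  intros Hx.
  destruct (is_RInt_gen_of_bounded (gamma_integrand x)
             (fun t Ht => gamma_integrand_continuous x t Ht)
             (fun t _ => Rlt_le _ _ (gamma_integrand_pos x t))
             (/ x + 2 * exp (tail_const (x - 1)))
             (fun a b Ha Hb => gamma_integrand_RInt_bounded x a b Hx Ha Hb)) as [S [HS Hle]].
  unfold Gamma. fold (gamma_integrand x).
  rewrite (is_RInt_gen_unique (V:=R_CompleteNormedModule)
             (FFa:=proper_at_right_0) (FFb:=proper_p_infty) _ S HS).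
  auto.
Qed.

Lemma is_RInt_gen_Gamma x : 0 < x ->
  is_RInt_gen (gamma_integrand x) (at_right 0) (Rbar_locally p_infty) (Gamma x).
Proof. intros Hx. apply Gamma_spec; auto. Qed.

Lemma Gamma_unique x v : 0 < x ->
  is_RInt_gen (gamma_integrand x) (at_right 0) (Rbar_locally p_infty) v -> Gamma x = v.
Proof. intros Hx H. apply (is_RInt_gen_0_infty_unique _ _ _ (is_RInt_gen_Gamma x Hx) H). Qed.

(* Gamma x dominates the (positive) integral over [1, 2]. *)
Lemma Gamma_pos x : 0 < x -> 0 < Gamma x.
Proof.
  intros Hx. apply Rlt_le_trans with (RInt (gamma_integrand x) 1 2).
  - apply RInt_gt_0; [lra| |].
    + intros; apply gamma_integrand_pos.
    + intros; apply gamma_integrand_continuous; lra.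
  - apply Gamma_spec; lra.
Qed.

(* Gamma 1 = 1, with antiderivative -exp(-t). *)
Lemma Gamma_1 : Gamma 1 = 1.
Proof.
  replace 1 with (0 - - (1)) at 2 by ring.
  apply Gamma_unique; [lra|].
  apply (is_RInt_gen_antiderivative (fun t => - exp (- t))).
  - intros t Ht. auto_derive; auto. unfold gamma_integrand.
    replace (1 - 1) with 0 by ring. rewrite Rpower_O by auto. ring.
  - intros; apply gamma_integrand_continuous; auto.
  - (* -exp(-t) is continuous at 0 with value -1 *)
    apply (filterlim_filter_le_1 _ (@filter_le_within R (locally 0)
             (@filter_filter _ _ (locally_filter (0:R))) (fun u => 0 < u))).
    replace (- (1)) with (- exp (- 0)) by (rewrite Ropp_0, exp_0; auto).
    apply (ex_derive_continuous (K:=R_AbsRing) (V:=R_NormedModule)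
             (fun t => - exp (- t))). auto_derive; auto.
  - apply (lim_p_infty_0_of_exp_bound _ 1); [lra|]. intros t Ht.
    rewrite Rabs_Ropp, Rabs_right by (left; apply exp_pos).
    rewrite Rmult_1_l. apply exp_le_compat. lra.
Qed.

Lemma gamma_integrand_by_parts x t : 0 < x -> 0 < t ->
  is_derive (fun s => - gamma_integrand (x + 1) s) t
            (gamma_integrand (x + 1) t - x * gamma_integrand x t).
Proof.
  intros Hx Ht. unfold gamma_integrand, Rpower. auto_derive; auto.
  replace (x + 1 - 1) with x by ring.
  replace (exp ((x - 1) * ln t)) with (exp (x * ln t) * / t).
  - field. lra.
  - replace ((x - 1) * ln t) with (x * ln t + - ln t) by ring.
    rewrite exp_plus, exp_Ropp, exp_ln; auto.
Qed.

(* The functional equation, from the integration by parts above; both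
   boundary terms vanish. *)
Lemma Gamma_succ x : 0 < x -> Gamma (x + 1) = x * Gamma x.
Proof.
  intros Hx.
  assert (H0 : is_RInt_gen (fun t => gamma_integrand (x + 1) t - x * gamma_integrand x t)
                 (at_right 0) (Rbar_locally p_infty) (0 - 0)).
  { apply (is_RInt_gen_antiderivative (fun s => - gamma_integrand (x + 1) s)).
    - intros; apply gamma_integrand_by_parts; auto.
    - intros t Ht. apply (continuous_minus (V:=R_NormedModule)).
      + apply gamma_integrand_continuous; lra.
      + apply (continuous_scal_r x (gamma_integrand x)). apply gamma_integrand_continuous; lra.
    - (* boundary term at 0: |t^x e^(-t)| <= t^x *)
      apply (lim_at_right_0_of_Rpower_bound _ x); auto. intros t Ht.
      unfold gamma_integrand. rewrite Rabs_Ropp, Rabs_right.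
      + replace (x + 1 - 1) with x by ring.
        rewrite <- (Rmult_1_r (Rpower t x)) at 2. apply Rmult_le_compat_l.
        * unfold Rpower; left; apply exp_pos.
        * rewrite <- exp_0. apply exp_le_compat. lra.
      + apply Rle_ge. left. apply (gamma_integrand_pos (x + 1) t).
    -
      apply (lim_p_infty_0_of_exp_bound _ (exp (tail_const (x + 1 - 1)))); [apply exp_pos|].
      intros t Ht. rewrite Rabs_Ropp, Rabs_right by (left; apply gamma_integrand_pos).
      apply gamma_integrand_tail; auto. }
  assert (H1 := is_RInt_gen_minus (Fa:=at_right 0) (Fb:=Rbar_locally p_infty) _ _ _ _
     (is_RInt_gen_Gamma (x + 1) ltac:(lra))
     (is_RInt_gen_scal (Fa:=at_right 0) (Fb:=Rbar_locally p_infty) _ x _ (is_RInt_gen_Gamma _ Hx))).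
  assert (E := is_RInt_gen_0_infty_unique _ _ _ H0 H1).
  change (0 - 0 = Gamma (x + 1) - x * Gamma x) in E. lra.
Qed.

Lemma Gamma_nat n : Gamma (INR n + 1) = INR (fact n).
Proof.
  induction n.
  - simpl. rewrite Rplus_0_l. apply Gamma_1.
  - rewrite S_INR, Gamma_succ by (generalize (pos_INR n); lra).
    rewrite IHn. rewrite fact_simpl, mult_INR, S_INR. ring.
Qed.

Definition convex_pos (f : R -> R) : Prop :=
  forall a b l, 0 < a -> 0 < b -> 0 <= l <= 1 ->
    f (l * a + (1 - l) * b) <= l * f a + (1 - l) * f b.

(* Hölder's inequality for Gamma: (a, A) |-> exp(-A) Gamma a is jointly
   convex, because its integrand is the exponential of an affine function of
   (a, A) for each fixed t. *)
Lemma Gamma_scaled_convex a b l A B : 0 < a -> 0 < b -> 0 <= l <= 1 ->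
  exp (- (l * A + (1 - l) * B)) * Gamma (l * a + (1 - l) * b)
  <= l * exp (- A) * Gamma a + (1 - l) * exp (- B) * Gamma b.
Proof.
  intros Ha Hb Hl.
  assert (Hc : 0 < l * a + (1 - l) * b) by nra.
  set (K := exp (- (l * A + (1 - l) * B))).
  assert (pointwise : forall t, 0 < t ->
    K * gamma_integrand (l * a + (1 - l) * b) t
    <= l * exp (- A) * gamma_integrand a t + (1 - l) * exp (- B) * gamma_integrand b t).
  { intros t Ht. unfold K. rewrite !gamma_integrand_exp by auto.
    rewrite !Rmult_assoc, <- !exp_plus.
    replace (- (l * A + (1 - l) * B) + ((l * a + (1 - l) * b - 1) * ln t - t))
      with (l * (- A + ((a - 1) * ln t - t)) + (1 - l) * (- B + ((b - 1) * ln t - t)))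
      by ring.
    apply exp_convex; auto. }
  assert (H1 := is_RInt_gen_scal (Fa:=at_right 0) (Fb:=Rbar_locally p_infty)
                  _ K _ (is_RInt_gen_Gamma _ Hc)).
  assert (H2 := is_RInt_gen_plus (Fa:=at_right 0) (Fb:=Rbar_locally p_infty) _ _ _ _
     (is_RInt_gen_scal (Fa:=at_right 0) (Fb:=Rbar_locally p_infty)
        _ (l * exp (- A)) _ (is_RInt_gen_Gamma _ Ha))
     (is_RInt_gen_scal (Fa:=at_right 0) (Fb:=Rbar_locally p_infty)
        _ ((1 - l) * exp (- B)) _ (is_RInt_gen_Gamma _ Hb))).
  assert (F1 : filter_prod (at_right 0) (Rbar_locally p_infty) (fun ab => fst ab <= snd ab))
    by (apply eventually_0_infty; intros; simpl; lra).
  assert (F2 : filter_prod (at_right 0) (Rbar_locally p_infty) (fun ab =>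
     forall t, fst ab <= t <= snd ab ->
     norm (scal K (gamma_integrand (l * a + (1 - l) * b) t)) <=
     plus (scal (l * exp (- A)) (gamma_integrand a t))
          (scal ((1 - l) * exp (- B)) (gamma_integrand b t)))).
  { apply eventually_0_infty. intros a0 b0 H01 H02 t Ht. simpl in Ht.
    change (Rabs (K * gamma_integrand (l * a + (1 - l) * b) t)
            <= l * exp (- A) * gamma_integrand a t + (1 - l) * exp (- B) * gamma_integrand b t).
    rewrite Rabs_right by (apply Rle_ge, Rmult_le_pos;
                           [left; apply exp_pos| left; apply gamma_integrand_pos]).
    apply pointwise; lra. }
  assert (H := RInt_gen_norm (V:=R_CompleteNormedModule)
                 (Fa:=at_right 0) (Fb:=Rbar_locally p_infty) _ _ _ _ F1 F2 H1 H2).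
  change (Rabs (K * Gamma (l * a + (1 - l) * b))
          <= l * exp (- A) * Gamma a + (1 - l) * exp (- B) * Gamma b) in H.
  generalize (Rle_abs (K * Gamma (l * a + (1 - l) * b))). lra.
Qed.

Definition LG (x : R) : R := ln (Gamma x).

(* Log-convexity of Gamma: take A = LG a and B = LG b above. *)
Lemma LG_convex : convex_pos LG.
Proof.
  intros a b l Ha Hb Hl.
  assert (Ga := Gamma_pos a Ha). assert (Gb := Gamma_pos b Hb).
  assert (Hc : 0 < l * a + (1 - l) * b) by nra.
  assert (Gc := Gamma_pos _ Hc).
  generalize (Gamma_scaled_convex a b l (LG a) (LG b) Ha Hb Hl).
  assert (Ea : exp (- LG a) * Gamma a = 1)
    by (unfold LG; rewrite exp_Ropp, exp_ln by auto; field; lra).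
  assert (Eb : exp (- LG b) * Gamma b = 1)
    by (unfold LG; rewrite exp_Ropp, exp_ln by auto; field; lra).
  rewrite !Rmult_assoc, Ea, Eb, exp_Ropp. intros H.
  set (m := l * LG a + (1 - l) * LG b) in *.
  assert (Gamma (l * a + (1 - l) * b) <= exp m).
  { apply (Rmult_le_reg_l (/ exp m)). apply Rinv_0_lt_compat, exp_pos.
    rewrite Rinv_l by (apply Rgt_not_eq, exp_pos). lra. }
  rewrite <- (ln_exp m). unfold LG. apply ln_le; auto.
Qed.

Lemma LG_succ x : 0 < x -> LG (x + 1) = LG x + ln x.
Proof.
  intros Hx. unfold LG. rewrite Gamma_succ, ln_mult by (auto; apply Gamma_pos; auto). ring.
Qed.

Lemma LG_1 : LG 1 = 0.
Proof. unfold LG. rewrite Gamma_1. apply ln_1. Qed.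

Lemma LG_2 : LG 2 = 0.
Proof. replace 2 with (1 + 1) by ring. rewrite LG_succ, LG_1, ln_1 by lra. ring. Qed.

(* LG (n + 1) = ln n! >= 0. *)
Lemma LG_nat_nonneg n : 0 <= LG (INR n + 1).
Proof.
  unfold LG. rewrite Gamma_nat, <- ln_1. apply ln_le; [lra|].
  apply (le_INR 1). apply lt_O_fact.
Qed.

Definition slope (f : R -> R) (a b : R) : R := (f b - f a) / (b - a).

Lemma slope_sym f a b : slope f a b = slope f b a.
Proof. unfold slope. destruct (Req_dec a b). subst; auto. field. lra. Qed.

Section ConvexOnPositiveReals.
Variable f : R -> R.
Hypothesis f_convex : convex_pos f.

(* Convexity for three points a < b < c, without division. *)
Lemma convex_three_points a b c : 0 < a -> a < b -> b < c ->
  f b * (c - a) <= (c - b) * f a + (b - a) * f c.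
Proof.
  intros Ha Hab Hbc. set (l := (c - b) / (c - a)).
  assert (Hl : 0 <= l <= 1).
  { unfold l. split.
    - apply Rmult_le_pos. lra. left; apply Rinv_0_lt_compat; lra.
    - apply (Rmult_le_reg_r (c - a)). lra. unfold Rdiv. rewrite Rmult_assoc, Rinv_l by lra. lra. }
  assert (Eb : b = l * a + (1 - l) * c) by (unfold l; field; lra).
  generalize (f_convex a c l Ha ltac:(lra) Hl). rewrite <- Eb. intros H.
  apply (Rmult_le_compat_r (c - a)) in H; [|lra].
  replace ((l * f a + (1 - l) * f c) * (c - a)) with ((c - b) * f a + (b - a) * f c) in H
    by (unfold l; field; lra). auto.
Qed.

Lemma slope_le_right a b c : 0 < a -> a < b -> b < c -> slope f a b <= slope f a c.
Proof.
  intros. unfold slope. apply div_le_cross; try lra.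
  generalize (convex_three_points a b c); intros. nra.
Qed.

Lemma slope_le_left a b c : 0 < a -> a < b -> b < c -> slope f a c <= slope f b c.
Proof.
  intros. unfold slope. apply div_le_cross; try lra.
  generalize (convex_three_points a b c); intros. nra.
Qed.

Lemma slope_le_chain a b c : 0 < a -> a < b -> b < c -> slope f a b <= slope f b c.
Proof.
  intros. apply Rle_trans with (slope f a c).
  - apply slope_le_right; auto.
  - apply slope_le_left; auto.
Qed.

(* If the right slope at t minus the left slope at t can be made arbitrarily
   small, the supremum D of the left slopes is the derivative at t. *)
Lemma convex_derivable t : 0 < t ->
  (forall eps, 0 < eps -> exists h, 0 < h < t /\ slope f t (t + h) - slope f (t - h) t < eps) ->
  exists D, derivable_pt_lim f t D.
Proof.
  intros Ht Hgap.
  set (E := fun y => exists h, 0 < h < t /\ y = slope f (t - h) t).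
  assert (Hub : forall h k, 0 < h < t -> 0 < k -> slope f (t - h) t <= slope f t (t + k))
    by (intros h k Hh Hk; apply slope_le_chain; lra).
  assert (bE : bound E) by (exists (slope f t (t + 1)); intros y [h [Hh ->]]; apply Hub; lra).
  assert (nE : exists y, E y) by (exists (slope f (t - t / 2) t), (t / 2); split; [lra|auto]).
  destruct (completeness E bE nE) as [D [HD1 HD2]].
  assert (HDl : forall h, 0 < h < t -> slope f (t - h) t <= D)
    by (intros h Hh; apply HD1; exists h; auto).
  assert (HDr : forall k, 0 < k -> D <= slope f t (t + k))
    by (intros k Hk; apply HD2; intros y [h [Hh ->]]; apply Hub; auto).
  exists D. intros eps Heps.
  destruct (Hgap eps Heps) as [h0 [Hh0 Hj]].
  exists (mkposreal h0 (proj1 Hh0)). intros h Hh0' Hh. simpl in Hh.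
  replace ((f (t + h) - f t) / h) with (slope f t (t + h))
    by (unfold slope; replace (t + h - t) with h by ring; auto).
  assert (M1 := HDl h0 Hh0). assert (M2 := HDr h0 ltac:(lra)).
  destruct (Rlt_or_le 0 h) as [Hp|Hn].
  - rewrite Rabs_right in Hh by lra.
    assert (slope f t (t + h) <= slope f t (t + h0)) by (apply slope_le_right; lra).
    assert (A2 := HDr h Hp).
    rewrite Rabs_right by lra. lra.
  - rewrite Rabs_left in Hh by lra.
    rewrite slope_sym. replace (t + h) with (t - - h) by ring.
    assert (slope f (t - h0) t <= slope f (t - - h) t) by (apply slope_le_left; lra).
    assert (A2 := HDl (- h) ltac:(lra)).
    rewrite Rabs_left1 by lra. lra.
Qed.

Section Tangent.
Variables (x0 D : R).
Hypothesis x0_pos : 0 < x0.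
Hypothesis f_deriv : derivable_pt_lim f x0 D.

Lemma slope_le_derivative x : 0 < x -> x < x0 -> slope f x x0 <= D.
Proof.
  intros Hx Hlt. apply Rnot_lt_le. intros H.
  destruct (f_deriv (slope f x x0 - D) ltac:(lra)) as [d Hd].
  set (h := - Rmin (d / 2) ((x0 - x) / 2)).
  assert (Hh1 : 0 < Rmin (d / 2) ((x0 - x) / 2)) by (apply Rmin_pos; generalize (cond_pos d); lra).
  assert (Hh2 : Rmin (d / 2) ((x0 - x) / 2) <= d / 2) by apply Rmin_l.
  assert (Hh3 : Rmin (d / 2) ((x0 - x) / 2) <= (x0 - x) / 2) by apply Rmin_r.
  specialize (Hd h ltac:(unfold h; lra)
               ltac:(unfold h; rewrite Rabs_Ropp, Rabs_right; generalize (cond_pos d); lra)).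
  replace ((f (x0 + h) - f x0) / h) with (slope f (x0 + h) x0) in Hd
    by (rewrite slope_sym; unfold slope; replace (x0 + h - x0) with h by ring; auto).
  assert (slope f x x0 <= slope f (x0 + h) x0) by (apply slope_le_left; unfold h; lra).
  apply Rabs_def2 in Hd. lra.
Qed.

Lemma derivative_le_slope x : x0 < x -> D <= slope f x0 x.
Proof.
  intros Hgt. apply Rnot_lt_le. intros H.
  destruct (f_deriv (D - slope f x0 x) ltac:(lra)) as [d Hd].
  set (h := Rmin (d / 2) ((x - x0) / 2)).
  assert (Hh1 : 0 < h) by (apply Rmin_pos; generalize (cond_pos d); lra).
  assert (Hh2 : h <= d / 2) by apply Rmin_l.
  assert (Hh3 : h <= (x - x0) / 2) by apply Rmin_r.
  specialize (Hd h ltac:(lra) ltac:(rewrite Rabs_right; generalize (cond_pos d); lra)).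
  replace ((f (x0 + h) - f x0) / h) with (slope f x0 (x0 + h)) in Hd
    by (unfold slope; replace (x0 + h - x0) with h by ring; auto).
  assert (slope f x0 (x0 + h) <= slope f x0 x) by (apply slope_le_right; lra).
  apply Rabs_def2 in Hd. lra.
Qed.

Lemma convex_tangent x : 0 < x -> f x0 + D * (x - x0) <= f x.
Proof.
  intros Hx. destruct (Rtotal_order x x0) as [Hlt|[Heq|Hgt]].
  - assert (Hs := slope_le_derivative x Hx Hlt). unfold slope in Hs.
    apply (Rmult_le_compat_r (x0 - x)) in Hs; [|lra].
    replace ((f x0 - f x) / (x0 - x) * (x0 - x)) with (f x0 - f x) in Hs by (field; lra).
    lra.
  - subst. lra.
  - assert (Hs := derivative_le_slope x Hgt). unfold slope in Hs.
    apply (Rmult_le_compat_r (x - x0)) in Hs; [|lra].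
    replace ((f x - f x0) / (x - x0) * (x - x0)) with (f x - f x0) in Hs by (field; lra).
    lra.
Qed.

End Tangent.
End ConvexOnPositiveReals.

Fixpoint log_sum (x : R) (n : nat) : R :=
  match n with 0 => 0 | S m => log_sum x m + ln (1 + x / INR (S m)) end.

Fixpoint harmonic (n : nat) : R :=
  match n with 0 => 0 | S m => harmonic m + / INR (S m) end.

Lemma log_sum_S x n : log_sum x (S n) = log_sum x n + ln (1 + x / INR (S n)).
Proof. reflexivity. Qed.

Lemma harmonic_S n : harmonic (S n) = harmonic n + / INR (S n).
Proof. reflexivity. Qed.

Lemma LG_shift x n : 0 < x ->
  LG (1 + x + INR n) - LG (1 + INR n) = LG (1 + x) + log_sum x n.
Proof.
  intros Hx. induction n.
  - simpl. rewrite !Rplus_0_r, LG_1. ring.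
  - rewrite log_sum_S, <- Rplus_assoc, <- IHn.
    assert (Hn := pos_INR n).
    replace (1 + x + INR (S n)) with ((1 + x + INR n) + 1) by (rewrite S_INR; ring).
    replace (1 + INR (S n)) with ((1 + INR n) + 1) by (rewrite S_INR; ring).
    rewrite !LG_succ by lra.
    replace (1 + x / INR (S n)) with ((1 + x + INR n) / (1 + INR n))
      by (rewrite S_INR; field; lra).
    rewrite ln_div by lra. ring.
Qed.

Lemma LG_nat_step n : (1 <= n)%nat -> LG (1 + INR n) - LG (INR n) = ln (INR n).
Proof.
  intros Hn. assert (1 <= INR n) by (apply (le_INR 1); auto).
  rewrite Rplus_comm, LG_succ by lra. ring.
Qed.

(* Bohr-Mollerup lower bound: compare slopes of LG over [n, n+1] and
   [n+1, n+1+x]. *)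
Lemma LG_1p_ge_partial x n : 0 < x -> (1 <= n)%nat ->
  x * ln (INR n) - log_sum x n <= LG (1 + x).
Proof.
  intros Hx Hn. assert (H1 : 1 <= INR n) by (apply (le_INR 1); auto).
  generalize (slope_le_chain LG LG_convex (INR n) (1 + INR n) (1 + x + INR n)
                ltac:(lra) ltac:(lra) ltac:(lra)).
  unfold slope. rewrite LG_nat_step, LG_shift by auto.
  replace (1 + INR n - INR n) with 1 by ring.
  replace (1 + x + INR n - (1 + INR n)) with x by ring.
  intros H. rewrite Rdiv_1_r in H. apply (Rmult_le_compat_l x) in H; [|lra].
  replace (x * ((LG (1 + x) + log_sum x n) / x)) with (LG (1 + x) + log_sum x n) in H
    by (field; lra).
  lra.
Qed.

(* Bohr-Mollerup upper bound (0 < x <= 1): compare slopes over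
   [n+1, n+1+x] and [n+1, n+2]. *)
Lemma LG_1p_le_partial x n : 0 < x <= 1 ->
  LG (1 + x) <= x * ln (INR n + 1) - log_sum x n.
Proof.
  intros Hx. assert (Hn := pos_INR n).
  assert (E2 : LG (1 + (INR n + 1)) - LG (1 + INR n) = ln (INR n + 1)).
  { replace (1 + (INR n + 1)) with ((1 + INR n) + 1) by ring.
    rewrite LG_succ by lra. rewrite (Rplus_comm 1 (INR n)). ring. }
  destruct (Req_dec x 1) as [->|Hx1].
  - generalize (LG_shift 1 n ltac:(lra)).
    replace (1 + 1 + INR n) with (1 + (INR n + 1)) by ring. intros; lra.
  - generalize (slope_le_right LG LG_convex (1 + INR n) (1 + x + INR n) (1 + (INR n + 1))
                  ltac:(lra) ltac:(lra) ltac:(lra)).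
    unfold slope. rewrite E2, LG_shift by lra.
    replace (1 + (INR n + 1) - (1 + INR n)) with 1 by ring.
    replace (1 + x + INR n - (1 + INR n)) with x by ring.
    intros H. rewrite Rdiv_1_r in H. apply (Rmult_le_compat_l x) in H; [|lra].
    replace (x * ((LG (1 + x) + log_sum x n) / x)) with (LG (1 + x) + log_sum x n) in H
      by (field; lra).
    lra.
Qed.

(* The case n = 1: LG (1 + x) <= x ln 2 on (0, 1]. *)
Lemma LG_1p_le_ln2 x : 0 < x <= 1 -> LG (1 + x) <= x * ln 2.
Proof.
  intros Hx. generalize (LG_1p_le_partial x 1 Hx). rewrite log_sum_S.
  change (log_sum x 0) with 0. replace (INR 1) with 1 by reflexivity. replace (1 + 1) with 2 by ring.
  assert (0 <= ln (1 + x / 1)) by (rewrite <- ln_1; apply ln_le; unfold Rdiv; lra).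
  lra.
Qed.

Lemma log_sum_le x n : 0 <= x -> log_sum x n <= x * harmonic n.
Proof.
  intros Hx. induction n; [simpl; lra|]. rewrite log_sum_S, harmonic_S.
  assert (0 < INR (S n)) by (apply lt_0_INR; lia).
  assert (ln (1 + x / INR (S n)) <= x / INR (S n))
    by (apply ln_1p_le; apply Rdiv_le_0_compat; lra).
  unfold Rdiv in *. lra.
Qed.

Lemma log_sum_ge x n : 0 <= x -> x * harmonic n - log_sum x n <= INR n * x ^ 2.
Proof.
  intros Hx. induction n; [simpl; lra|]. rewrite log_sum_S, harmonic_S.
  assert (Hk : 1 <= INR (S n)) by (apply (le_INR 1); lia).
  set (k := INR (S n)) in *.
  assert (H1 : (x / k) / (1 + x / k) <= ln (1 + x / k))
    by (apply ln_1p_ge; apply Rdiv_le_0_compat; lra).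
  replace ((x / k) / (1 + x / k)) with (x / (k + x)) in H1 by (field; lra).
  assert (H2 : x * / k - x / (k + x) <= x ^ 2).
  { replace (x * / k - x / (k + x)) with (x ^ 2 / (k * (k + x))) by (field; lra).
    apply (Rmult_le_reg_r (k * (k + x))). nra. unfold Rdiv.
    rewrite Rmult_assoc, Rinv_l by nra. apply Rmult_le_compat_l; nra. }
  replace (k * x ^ 2) with (INR n * x ^ 2 + x ^ 2) by (unfold k; rewrite S_INR; ring).
  unfold Rdiv in *. lra.
Qed.

Definition euler_term (n : nat) : R := / INR (S n) - ln (1 + / INR (S n)).

Lemma euler_partial_sum n :
  @eq R (sum_n euler_term n) (harmonic (S n) - ln (INR (S n) + 1)).
Proof.
  induction n.
  - rewrite sum_O. unfold euler_term. simpl harmonic. replace (INR 1) with 1 by reflexivity.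
    replace (1 + / 1) with (1 + 1) by field. ring.
  - rewrite sum_Sn, IHn. change (plus ?a ?b) with (a + b). unfold euler_term.
    rewrite (harmonic_S (S n)).
    assert (H0 : 0 < INR (S n)) by (apply lt_0_INR; lia).
    rewrite (S_INR (S n)).
    replace (1 + / (INR (S n) + 1)) with ((INR (S n) + 1 + 1) / (INR (S n) + 1))
      by (field; lra).
    rewrite ln_div by lra. ring.
Qed.

(* The terms are nonnegative, since ln (1 + u) <= u. *)
Lemma euler_term_nonneg n : 0 <= euler_term n.
Proof.
  unfold euler_term. assert (0 < INR (S n)) by (apply lt_0_INR; lia).
  generalize (ln_1p_le (/ INR (S n)) ltac:(left; apply Rinv_0_lt_compat; auto)). lra.
Qed.

(* The partial sums telescope below 1 - 1/(n+2). *)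
Lemma euler_partial_sum_le_1 n : sum_n euler_term n <= 1.
Proof.
  assert (H : forall n, sum_n euler_term n <= 1 - / INR (S (S n))).
  { induction n0.
    - rewrite sum_O. unfold euler_term. replace (INR 1) with 1 by reflexivity.
      rewrite Rinv_1. generalize (ln_1p_ge 1 ltac:(lra)).
      replace (INR 2) with 2 by reflexivity. lra.
    - rewrite sum_Sn. change (plus ?a ?b) with (a + b). unfold euler_term at 2.
      assert (Hk : 0 < INR (S (S n0))) by (apply lt_0_INR; lia).
      generalize (ln_1p_ge (/ INR (S (S n0))) ltac:(left; apply Rinv_0_lt_compat; auto)).
      replace (/ INR (S (S n0)) / (1 + / INR (S (S n0)))) with (/ INR (S (S (S n0))))
        by (rewrite (S_INR (S (S n0))); field; lra).
      lra. }
  generalize (H n). assert (0 < / INR (S (S n))) by (apply Rinv_0_lt_compat, lt_0_INR; lia).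
  lra.
Qed.

(* The partial sums increase and are bounded, so they converge to gamma. *)
Lemma is_lim_euler_gamma : is_lim_seq (sum_n euler_term) euler_gamma.
Proof.
  assert (Hex : ex_finite_lim_seq (sum_n euler_term)).
  { apply (ex_finite_lim_seq_incr _ 1).
    - intros n. rewrite sum_Sn. change (plus ?a ?b) with (a + b).
      generalize (euler_term_nonneg (S n)). lra.
    - apply euler_partial_sum_le_1. }
  destruct Hex as [l Hl]. unfold euler_gamma. fold euler_term.
  unfold Series. rewrite (is_lim_seq_unique _ _ Hl). simpl. auto.
Qed.

Lemma euler_partial_sum_le n : sum_n euler_term n <= euler_gamma.
Proof.
  apply is_lim_seq_incr_compare; [apply is_lim_euler_gamma|].
  intros m. rewrite sum_Sn. change (plus ?a ?b) with (a + b).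
  generalize (euler_term_nonneg (S m)). lra.
Qed.

Lemma euler_partial_sum_near eps : 0 < eps ->
  exists n, euler_gamma - eps < sum_n euler_term n.
Proof.
  intros He. generalize is_lim_euler_gamma. intros H. apply is_lim_seq_spec in H.
  destruct (H (mkposreal eps He)) as [N HN]. exists N.
  specialize (HN N (Nat.le_refl N)). simpl in HN. apply Rabs_def2 in HN. lra.
Qed.

(* -gamma x <= LG (1 + x) for every x > 0: let n -> oo in the lower
   Bohr-Mollerup bound. *)
Lemma LG_1p_ge x : 0 < x -> - euler_gamma * x <= LG (1 + x).
Proof.
  intros Hx. apply Rnot_lt_le. intros H.
  set (d := - euler_gamma * x - LG (1 + x)).
  assert (Hd : 0 < d) by (unfold d; lra).
  destruct (nat_large (x / d)) as [m Hm]. set (n := S m) in *.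
  assert (Hn1 : (1 <= n)%nat) by (unfold n; lia).
  assert (HnR : 1 <= INR n) by (apply (le_INR 1); auto).
  generalize (LG_1p_ge_partial x n Hx Hn1) (log_sum_le x n ltac:(lra))
             (euler_partial_sum_le m) (euler_partial_sum m). fold n. intros B1 B2 B3 B4.
  assert (B5 : ln (INR n + 1) - ln (INR n) <= / INR n).
  { rewrite <- ln_div by lra. replace ((INR n + 1) / INR n) with (1 + / INR n) by (field; lra).
    apply ln_1p_le. left; apply Rinv_0_lt_compat; lra. }
  assert (B6 : x * / INR n < d).
  { apply (Rmult_lt_reg_r (INR n)). lra. rewrite Rmult_assoc, Rinv_l by lra.
    apply (Rmult_lt_compat_l d) in Hm; auto.
    replace (d * (x / d)) with x in Hm by (field; lra). lra. }
  assert (B7 : x * (ln (INR n + 1) - ln (INR n)) <= x * / INR n)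
    by (apply Rmult_le_compat_l; lra).
  assert (B8 : x * (harmonic n - ln (INR n + 1)) <= x * euler_gamma)
    by (apply Rmult_le_compat_l; lra).
  unfold d in B6. nra.
Qed.

(* LG (1 + x) <= (-gamma + eps) x for small x > 0: the upper Bohr-Mollerup
   bound with n fixed so that the n-th partial sum is eps/2-close to gamma. *)
Lemma LG_1p_le_near_0 eps : 0 < eps -> exists delta, 0 < delta /\
  forall x, 0 < x < delta -> LG (1 + x) <= x * (- euler_gamma + eps).
Proof.
  intros He. destruct (euler_partial_sum_near (eps / 2) ltac:(lra)) as [m Hm].
  rewrite euler_partial_sum in Hm. set (n := S m) in *.
  assert (HnR : 1 <= INR n) by (apply (le_INR 1); unfold n; lia).
  exists (Rmin 1 (eps / (2 * INR n))). split.
  { apply Rmin_pos. lra. apply Rdiv_lt_0_compat; lra. }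
  intros x [Hx1 Hx2].
  assert (Hx3 : x <= 1) by (generalize (Rmin_l 1 (eps / (2 * INR n))); lra).
  assert (Hx4 : x < eps / (2 * INR n)) by (generalize (Rmin_r 1 (eps / (2 * INR n))); lra).
  generalize (LG_1p_le_partial x n ltac:(lra)) (log_sum_ge x n ltac:(lra)). intros B1 B2.
  assert (B3 : INR n * x < eps / 2).
  { apply (Rmult_lt_compat_l (2 * INR n)) in Hx4; [|lra].
    replace (2 * INR n * (eps / (2 * INR n))) with eps in Hx4 by (field; lra). lra. }
  assert (B4 : INR n * x ^ 2 <= x * (eps / 2)).
  { replace (INR n * x ^ 2) with (x * (INR n * x)) by ring. apply Rmult_le_compat_l; lra. }
  assert (B5 : x * (euler_gamma - eps / 2) <= x * (harmonic n - ln (INR n + 1)))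
    by (apply Rmult_le_compat_l; lra).
  nra.
Qed.

Lemma is_lim_scaled_LG : is_lim (fun a => a * LG (1 + / a)) p_infty (- euler_gamma).
Proof.
  apply is_lim_spec. intros eps.
  destruct (LG_1p_le_near_0 (eps / 2) ltac:(generalize (cond_pos eps); lra)) as [d [Hd HL]].
  exists (Rmax 1 (/ d)). intros a Ha.
  assert (Ha1 : 1 < a) by (generalize (Rmax_l 1 (/ d)); lra).
  assert (Ha2 : / d < a) by (generalize (Rmax_r 1 (/ d)); lra).
  assert (Hia : 0 < / a) by (apply Rinv_0_lt_compat; lra).
  assert (Hia2 : / a < d).
  { rewrite <- (Rinv_inv d). apply Rinv_lt_contravar; auto.
    apply Rmult_lt_0_compat; [apply Rinv_0_lt_compat|]; lra. }
  generalize (LG_1p_ge (/ a) Hia) (HL (/ a) (conj Hia Hia2)). intros H1 H2.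
  apply (Rmult_le_compat_l a) in H1; [|lra]. apply (Rmult_le_compat_l a) in H2; [|lra].
  replace (a * (- euler_gamma * / a)) with (- euler_gamma) in H1 by (field; lra).
  replace (a * (/ a * (- euler_gamma + eps / 2))) with (- euler_gamma + eps / 2) in H2
    by (field; lra).
  generalize (cond_pos eps). intros. apply Rabs_def1; lra.
Qed.

(* The gap between the right and the left
   difference quotient of LG at s with step h,
     slope_gap h s = slope LG s (s+h) - slope LG (s-h) s,
   changes under s |-> s+1 by a second difference of ln, which is O(h/s^2);
   far out it is at most (ln s - ln (s-h))/h = O(1/s).  Hence it can be made
   small, and convex_derivable applies. *)
Definition slope_gap (h s : R) : R := slope LG s (s + h) - slope LG (s - h) s.

Lemma ln_diff_le s h : 0 < h < s -> ln s - ln (s - h) <= h / (s - h).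
Proof.
  intros Hh. rewrite <- ln_div by lra.
  generalize (ln_le_sub_1 (s / (s - h)) ltac:(apply Rdiv_lt_0_compat; lra)).
  replace (s / (s - h) - 1) with (h / (s - h)) by (field; lra). auto.
Qed.

Lemma ln_diff_ge s h : 0 < s -> 0 < h -> h / (s + h) <= ln (s + h) - ln s.
Proof.
  intros Hs Hh. rewrite <- ln_div by lra.
  generalize (ln_ge_1_sub_inv ((s + h) / s) ltac:(apply Rdiv_lt_0_compat; lra)).
  replace (1 - / ((s + h) / s)) with (h / (s + h)) by (field; lra). auto.
Qed.

(* Second difference of ln (divided by h), the change of the gap under s |-> s+1. *)
Definition ln_second_diff (h s : R) : R :=
  (ln s - ln (s - h)) / h - (ln (s + h) - ln s) / h.

Lemma slope_gap_succ h s : 0 < h < s -> slope_gap h (s + 1) = slope_gap h s - ln_second_diff h s.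
Proof.
  intros Hh. unfold slope_gap, ln_second_diff, slope.
  replace (s + 1 + h) with ((s + h) + 1) by ring.
  replace (s + 1 - h) with ((s - h) + 1) by ring.
  rewrite !LG_succ by lra. field. lra.
Qed.

Lemma slope_gap_le h s : 0 < h < 1 / 2 -> h < s -> slope_gap h s <= (ln s - ln (s - h)) / h.
Proof.
  intros Hh Hs.
  assert (A : slope LG s (s + h) <= slope LG (s + 1 - h) (s + 1)).
  { apply Rle_trans with (slope LG (s + h) (s + 1 - h)).
    - apply slope_le_chain; auto using LG_convex; lra.
    - apply slope_le_chain; auto using LG_convex; lra. }
  assert (B : slope LG (s + 1 - h) (s + 1) = slope LG (s - h) s + (ln s - ln (s - h)) / h).
  { unfold slope. replace (s + 1 - h) with ((s - h) + 1) by ring.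
    rewrite !LG_succ by lra. field. lra. }
  unfold slope_gap. lra.
Qed.

Lemma ln_second_diff_le t h s : 0 < h -> h <= t / 2 -> t <= s ->
  ln_second_diff h s <= 4 * h / (t * t).
Proof.
  intros Hh Ht Hs. unfold ln_second_diff.
  assert (A1 := ln_diff_le s h ltac:(lra)).
  assert (A2 := ln_diff_ge s h ltac:(lra) Hh).
  assert (A3 : (ln s - ln (s - h)) / h - (ln (s + h) - ln s) / h <= / (s - h) - / (s + h)).
  { apply Rle_trans with (h / (s - h) / h - h / (s + h) / h).
    - unfold Rdiv at 1 3. unfold Rdiv at 3.
      assert (0 < / h) by (apply Rinv_0_lt_compat; auto).
      apply Rplus_le_compat; [apply Rmult_le_compat_r; lra
                             | apply Ropp_le_contravar, Rmult_le_compat_r; lra].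
    - right. field. lra. }
  replace (/ (s - h) - / (s + h)) with (2 * h / ((s - h) * (s + h))) in A3 by (field; lra).
  apply Rle_trans with (1 := A3).
  assert (Hsh : (s - h) * (s + h) >= t * t / 2) by nra.
  apply div_le_cross; [nra|nra|].
  assert (4 * h * (t * t / 2) <= 4 * h * ((s - h) * (s + h))) by (apply Rmult_le_compat_l; lra).
  lra.
Qed.

Lemma slope_gap_shift t h N : 0 < h < 1 / 2 -> h <= t / 2 ->
  slope_gap h t <= slope_gap h (t + INR N) + INR N * (4 * h / (t * t)).
Proof.
  intros Hh Ht. induction N.
  - simpl. rewrite Rplus_0_r. lra.
  - rewrite S_INR. assert (Hn := pos_INR N).
    replace (t + (INR N + 1)) with ((t + INR N) + 1) by ring.
    rewrite slope_gap_succ by lra.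
    assert (HE := ln_second_diff_le t h (t + INR N) ltac:(lra) Ht ltac:(lra)). lra.
Qed.

(* Shift by N > 2/eps, then take h small compared with t^2/N. *)
Lemma slope_gap_small t : 0 < t -> forall eps, 0 < eps ->
  exists h, 0 < h < t /\ slope_gap h t < eps.
Proof.
  intros Ht eps He.
  destruct (nat_large (2 / eps)) as [m Hm]. set (N := S m) in *.
  assert (HN : 1 <= INR N) by (apply (le_INR 1); unfold N; lia).
  set (h := Rmin (Rmin (1 / 4) (t / 2)) (eps * (t * t) / (16 * INR N))).
  assert (Hh0 : 0 < h).
  { unfold h. apply Rmin_pos; [apply Rmin_pos; lra|].
    apply Rdiv_lt_0_compat; [apply Rmult_lt_0_compat; [lra|nra]|lra]. }
  assert (Hh1 : h <= 1 / 4 /\ h <= t / 2).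
  { generalize (Rmin_l (Rmin (1/4) (t/2)) (eps * (t * t) / (16 * INR N)))
               (Rmin_l (1/4) (t/2)) (Rmin_r (1/4) (t/2)). unfold h. lra. }
  assert (Hh3 : h <= eps * (t * t) / (16 * INR N)) by (unfold h; apply Rmin_r).
  exists h. split; [lra|].
  assert (A1 := slope_gap_shift t h N ltac:(lra) ltac:(lra)).
  assert (A2 := slope_gap_le h (t + INR N) ltac:(lra) ltac:(lra)).
  assert (A3 := ln_diff_le (t + INR N) h ltac:(lra)).
  assert (A4 : (ln (t + INR N) - ln (t + INR N - h)) / h <= / INR N).
  { apply Rle_trans with (h / (t + INR N - h) / h).
    - unfold Rdiv. apply Rmult_le_compat_r; auto. left; apply Rinv_0_lt_compat; lra.
    - replace (h / (t + INR N - h) / h) with (/ (t + INR N - h)) by (field; lra).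
      apply Rinv_le_contravar; lra. }
  assert (A5 : / INR N < eps / 2).
  { apply (Rmult_lt_reg_l (INR N)). lra. rewrite Rinv_r by lra.
    apply (Rmult_lt_compat_l (eps / 2)) in Hm; [|lra].
    replace (eps / 2 * (2 / eps)) with 1 in Hm by (field; lra). lra. }
  assert (A6 : INR N * (4 * h / (t * t)) <= eps / 4).
  { replace (INR N * (4 * h / (t * t))) with (4 * INR N / (t * t) * h) by (field; lra).
    apply Rle_trans with (4 * INR N / (t * t) * (eps * (t * t) / (16 * INR N))).
    - apply Rmult_le_compat_l; auto. apply Rdiv_le_0_compat; nra.
    - right. field. split; lra. }
  lra.
Qed.

Lemma derivable_LG t : 0 < t -> derivable_pt_lim LG t (digamma t).
Proof.
  intros Ht.
  destruct (convex_derivable LG LG_convex t Ht (slope_gap_small t Ht)) as [D HD].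
  assert (HG : is_derive Gamma t (Gamma t * D)).
  { apply (is_derive_ext_loc (fun s => exp (LG s))).
    - apply (filter_imp (fun y => 0 < y)); [|apply locally_pos; auto].
      intros y Hy. unfold LG. apply exp_ln, Gamma_pos; auto.
    - apply is_derive_Reals.
      replace (Gamma t * D) with (exp (LG t) * D)
        by (unfold LG; rewrite exp_ln; auto; apply Gamma_pos; auto).
      apply (derivable_pt_lim_comp LG exp t D (exp (LG t))); auto.
      apply derivable_pt_lim_exp. }
  unfold digamma. rewrite (is_derive_unique _ _ _ HG).
  replace (Gamma t * D / Gamma t) with D; auto.
  field. apply Rgt_not_eq, Gamma_pos; auto.
Qed.

(* With c = ln kappa, g kappa alpha depends on alpha only through
   LG_ratio c (1 + 1/alpha); its derivative in x has numerator
   ratio_numer c x, which is phi kappa x. *)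
Definition LG_ratio (c x : R) : R := (c + LG x) / (x - 1).

Definition ratio_numer (c x : R) : R := (x - 1) * digamma x - (c + LG x).

Lemma derivable_LG_ratio c x : 1 < x ->
  derivable_pt_lim (LG_ratio c) x (ratio_numer c x / (x - 1) ^ 2).
Proof.
  intros Hx.
  assert (D1 : derivable_pt_lim (fun y => c + LG y) x (digamma x)).
  { generalize (derivable_pt_lim_plus (fun _ => c) LG x 0 (digamma x)
       (derivable_pt_lim_const c x) (derivable_LG x ltac:(lra))).
    rewrite Rplus_0_l. auto. }
  assert (D2 : derivable_pt_lim (fun y => y - 1) x 1).
  { generalize (derivable_pt_lim_minus id (fun _ => 1) x 1 0
       (derivable_pt_lim_id x) (derivable_pt_lim_const 1 x)).
    rewrite Rminus_0_r. auto. }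
  unfold LG_ratio, ratio_numer.
  replace (((x - 1) * digamma x - (c + LG x)) / (x - 1) ^ 2)
    with ((digamma x * (x - 1) - 1 * (c + LG x)) / Rsqr (x - 1)) by (unfold Rsqr; field; lra).
  exact (derivable_pt_lim_div (fun y => c + LG y) (fun y => y - 1) x (digamma x) 1
           D1 D2 ltac:(lra)).
Qed.

(* Every critical point of the ratio on (1, +oo) is a global minimiser
   there: the tangent line of LG at x0 passes through (1, -c). *)
Lemma LG_ratio_min c x0 x : 1 < x0 -> ratio_numer c x0 = 0 -> 1 < x ->
  LG_ratio c x0 <= LG_ratio c x.
Proof.
  intros H0 Hcrit Hx. unfold ratio_numer in Hcrit.
  assert (T := convex_tangent LG LG_convex x0 (digamma x0) ltac:(lra)
                 (derivable_LG x0 ltac:(lra)) x ltac:(lra)).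
  assert (E0 : LG_ratio c x0 = digamma x0)
    by (unfold LG_ratio; apply (Rmult_eq_reg_r (x0 - 1)); [|lra];
        unfold Rdiv; rewrite Rmult_assoc, Rinv_l by lra; lra).
  rewrite E0. unfold LG_ratio. apply (Rmult_le_reg_r (x - 1)); [lra|].
  unfold Rdiv. rewrite Rmult_assoc, Rinv_l, Rmult_1_r by lra. nra.
Qed.

(* LG is strictly midpoint convex: convexity of LG at y+1, z+1 together with
   LG (x+1) = LG x + ln x and the strict concavity of ln. *)
Lemma LG_midpoint_strict y z : 0 < y -> 0 < z -> y <> z ->
  LG ((y + z) / 2) < (LG y + LG z) / 2.
Proof.
  intros Hy Hz Hyz. set (w := (y + z) / 2).
  assert (C : LG (/ 2 * (y + 1) + (1 - / 2) * (z + 1))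
              <= / 2 * LG (y + 1) + (1 - / 2) * LG (z + 1)) by (apply LG_convex; lra).
  replace (/ 2 * (y + 1) + (1 - / 2) * (z + 1)) with (w + 1) in C by (unfold w; field).
  rewrite !LG_succ in C by (unfold w; lra).
  assert (Hw2 : y * z < w * w).
  { unfold w. assert (0 < (y - z) * (y - z)) by (assert (y - z <> 0) by lra; nra). nra. }
  assert (Hln : ln y + ln z < 2 * ln w).
  { rewrite <- ln_mult by lra. replace (2 * ln w) with (ln (w * w))
      by (rewrite ln_mult by (unfold w; lra); ring).
    apply ln_increasing; nra. }
  lra.
Qed.

(* Hence the ratio has at most one critical point on (1, +oo): two of them
   would both be minimisers, and the midpoint would do strictly better. *)
Lemma ratio_critical_unique c y z : 1 < y -> 1 < z ->
  ratio_numer c y = 0 -> ratio_numer c z = 0 -> y = z.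
Proof.
  intros Hy Hz Py Pz. destruct (Req_dec y z) as [E|Hyz]; auto. exfalso.
  set (m := LG_ratio c y).
  assert (Ey : c + LG y = m * (y - 1)) by (unfold m, LG_ratio; field; lra).
  assert (Ez : c + LG z = m * (z - 1)).
  { assert (LG_ratio c z = m)
      by (generalize (LG_ratio_min c y z Hy Py Hz) (LG_ratio_min c z y Hz Pz Hy); unfold m; lra).
    unfold LG_ratio in H. rewrite <- H. field. lra. }
  set (w := (y + z) / 2).
  assert (Ew : m * (w - 1) <= c + LG w).
  { assert (M := LG_ratio_min c y w Hy Py ltac:(unfold w; lra)).
    unfold LG_ratio in M. fold m in M. apply (Rmult_le_compat_r (w - 1)) in M; [|unfold w; lra].
    replace ((c + LG w) / (w - 1) * (w - 1)) with (c + LG w) in M by (field; unfold w; lra).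
    auto. }
  assert (S := LG_midpoint_strict y z ltac:(lra) ltac:(lra) Hyz). fold w in S.
  unfold w in Ew, S. lra.
Qed.

Lemma LG_ratio_2 c : LG_ratio c 2 = c.
Proof. unfold LG_ratio. rewrite LG_2. field. Qed.

(* Near 1 the ratio exceeds c: LG (1 + s) >= - ln (1 + s) >= - s. *)
Lemma LG_ratio_near_1 c : 0 < c -> exists s, 0 < s < 1 / 2 /\ c < LG_ratio c (1 + s).
Proof.
  intros Hc. set (s := c / (2 * (1 + c))). exists s.
  assert (Hs : 0 < s < 1 / 2).
  { unfold s. split. apply Rdiv_lt_0_compat; lra.
    apply (Rmult_lt_reg_r (2 * (1 + c))). lra.
    unfold Rdiv. rewrite Rmult_assoc, Rinv_l by lra. lra. }
  split; auto.
  assert (B := LG_1p_ge_partial s 1 ltac:(lra) (Nat.le_refl 1)).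
  rewrite log_sum_S in B. change (log_sum s 0) with 0 in B.
  replace (INR 1) with 1 in B by reflexivity.
  rewrite ln_1, Rdiv_1_r in B.
  assert (B2 := ln_1p_le s ltac:(lra)).
  assert (Es : s * (1 + c) = c / 2) by (unfold s; field; lra).
  unfold LG_ratio. replace (1 + s - 1) with s by ring.
  apply (Rmult_lt_reg_r s). lra. unfold Rdiv. rewrite Rmult_assoc, Rinv_l by lra. nra.
Qed.

(* Far out the ratio exceeds c as well: for ln n > 2c and b = 2n + 1,
   LG b >= LG (n+1) + n ln n >= n ln n by the slope inequality. *)
Lemma LG_ratio_far c : 0 < c -> exists b, 2 < b /\ c < LG_ratio c b.
Proof.
  intros Hc.
  destruct (nat_large (exp (2 * c))) as [m Hm]. set (n := S m) in *.
  assert (Hn1 : 1 <= INR n) by (apply (le_INR 1); unfold n; lia).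
  assert (Hln : 2 * c < ln (INR n)).
  { rewrite <- (ln_exp (2 * c)). apply ln_increasing; auto. apply exp_pos. }
  set (b := 2 * INR n + 1). exists b. split; [unfold b; lra|].
  assert (S1 := slope_le_chain LG LG_convex (INR n) (INR n + 1) b
                  ltac:(lra) ltac:(lra) ltac:(unfold b; lra)).
  unfold slope in S1. rewrite Rplus_comm, LG_nat_step in S1 by (unfold n; lia).
  rewrite (Rplus_comm 1 (INR n)) in S1.
  replace (INR n + 1 - INR n) with 1 in S1 by ring. rewrite Rdiv_1_r in S1.
  replace (b - (INR n + 1)) with (INR n) in S1 by (unfold b; ring).
  assert (G0 := LG_nat_nonneg n).
  apply (Rmult_le_compat_r (INR n)) in S1; [|lra].
  replace ((LG b - LG (INR n + 1)) / INR n * INR n) with (LG b - LG (INR n + 1)) in S1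
    by (field; lra).
  unfold LG_ratio. replace (b - 1) with (2 * INR n) by (unfold b; ring).
  apply (Rmult_lt_reg_r (2 * INR n)). lra.
  unfold Rdiv. rewrite Rmult_assoc, Rinv_l by lra. nra.
Qed.

(* The minimum of the ratio on [1 + s, b] lies strictly inside, since the
   value c at 2 is smaller than at both ends; there its derivative vanishes. *)
Lemma ratio_critical_exists c : 0 < c -> exists x0, 1 < x0 /\ ratio_numer c x0 = 0.
Proof.
  intros Hc.
  destruct (LG_ratio_near_1 c Hc) as [s [Hs Ha]].
  destruct (LG_ratio_far c Hc) as [b [Hb2 Hb]].
  assert (Hcont : forall x, 1 + s <= x <= b -> continuity_pt (LG_ratio c) x).
  { intros x Hx. apply derivable_continuous_pt.
    exists (ratio_numer c x / (x - 1) ^ 2). apply derivable_LG_ratio. lra. }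
  destruct (continuity_ab_min (LG_ratio c) (1 + s) b ltac:(lra) Hcont) as [mx [Hmin Hmx]].
  assert (M2 := Hmin 2 ltac:(lra)). rewrite LG_ratio_2 in M2.
  assert (Ma : 1 + s < mx).
  { destruct (Rle_lt_or_eq_dec (1 + s) mx (proj1 Hmx)) as [H|H]; auto. subst mx. lra. }
  assert (Mb : mx < b).
  { destruct (Rle_lt_or_eq_dec mx b (proj2 Hmx)) as [H|H]; auto. subst mx. lra. }
  exists mx. split; [lra|].
  assert (HD := derivable_LG_ratio c mx ltac:(lra)).
  assert (pr : derivable_pt (LG_ratio c) mx) by (eexists; exact HD).
  assert (Z := deriv_minimum (LG_ratio c) (1 + s) b mx pr Ma Mb
     (fun x H1 H2 => Hmin x (conj (Rlt_le _ _ H1) (Rlt_le _ _ H2)))).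
  rewrite (derive_pt_eq_0 _ _ _ pr HD) in Z.
  assert (Hq : 0 < (mx - 1) ^ 2) by (apply pow_lt; lra).
  apply (Rmult_eq_compat_r ((mx - 1) ^ 2)) in Z.
  unfold Rdiv in Z. rewrite Rmult_assoc, Rinv_l in Z by lra. lra.
Qed.

Lemma phi_eq kappa x : 0 < kappa -> 0 < x -> phi kappa x = ratio_numer (ln kappa) x.
Proof.
  intros Hk Hx. unfold phi, ratio_numer, LG. rewrite ln_mult; auto. apply Gamma_pos; auto.
Qed.

Definition gumbel_cdf (E : R) : R := 1 - exp (- exp E).

Lemma gumbel_cdf_le_compat E1 E2 : E1 <= E2 -> gumbel_cdf E1 <= gumbel_cdf E2.
Proof.
  intros H. unfold gumbel_cdf.
  assert (exp (- exp E2) <= exp (- exp E1)) by (apply exp_le_compat, Ropp_le_contravar, exp_le_compat; auto).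
  lra.
Qed.

(* ... and takes values in [0, exp E], since 1 - exp (-u) <= u. *)
Lemma gumbel_cdf_bounds E : 0 <= gumbel_cdf E <= exp E.
Proof.
  unfold gumbel_cdf. generalize (exp_ineq1_le (- exp E)) (exp_pos E). intros H1 H2.
  assert (exp (- exp E) <= 1) by (rewrite <- exp_0; apply exp_le_compat; lra).
  lra.
Qed.

Lemma g_as_ratio kappa alpha : 0 < kappa -> 0 < alpha ->
  g kappa alpha = gumbel_cdf (LG_ratio (ln kappa) (1 + / alpha)).
Proof.
  intros Hk Ha. assert (Hia : 0 < / alpha) by (apply Rinv_0_lt_compat; auto).
  unfold g, gumbel_cdf, Rpower, LG_ratio, LG.
  rewrite (Rplus_comm (/ alpha) 1), ln_mult by (auto; apply Gamma_pos; lra).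
  replace (1 + / alpha - 1) with (/ alpha) by ring.
  do 4 f_equal. field. lra.
Qed.

Lemma LG_ratio_inv c a : 0 < a -> LG_ratio c (1 + / a) = a * c + a * LG (1 + / a).
Proof.
  intros Ha. unfold LG_ratio. replace (1 + / a - 1) with (/ a) by ring. field. lra.
Qed.

Lemma is_glb_of_bound_and_limit (f : R -> R) (l : R) :
  (forall a, 0 < a -> l <= f a) -> is_lim f p_infty l ->
  is_glb_Rbar (fun y => exists a, 0 < a /\ y = f a) (Finite l).
Proof.
  intros Hlb Hlim. split.
  - intros y [a [Ha ->]]. simpl. auto.
  - intros b Hb. destruct b as [b| |]; simpl; auto.
    + apply Rnot_lt_le. intros H.
      apply is_lim_spec in Hlim. destruct (Hlim (mkposreal (b - l) ltac:(lra))) as [M HM].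
      set (a := Rmax 1 (M + 1)).
      assert (Ha : M < a) by (generalize (Rmax_r 1 (M + 1)); unfold a; lra).
      assert (Ha0 : 0 < a) by (generalize (Rmax_l 1 (M + 1)); unfold a; lra).
      specialize (HM a Ha). simpl in HM. apply Rabs_def2 in HM.
      specialize (Hb (f a) (ex_intro _ a (conj Ha0 eq_refl))). simpl in Hb. lra.
    + apply (Hb (f 1) (ex_intro _ 1 (conj Rlt_0_1 eq_refl))).
Qed.

Lemma g_nonneg kappa alpha : 0 < kappa -> 0 < alpha -> 0 <= g kappa alpha.
Proof. intros Hk Ha. rewrite g_as_ratio by auto. apply gumbel_cdf_bounds. Qed.

(* For kappa < 1 the exponent is at most alpha ln kappa + ln 2 -> -oo. *)
Lemma is_lim_g_lt_1 kappa : 0 < kappa < 1 -> is_lim (g kappa) p_infty 0.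
Proof.
  intros [Hk Hk1]. assert (Hlk : ln kappa < 0) by (rewrite <- ln_1; apply ln_increasing; auto).
  apply is_lim_spec. intros eps. assert (He := cond_pos eps).
  set (M := (ln eps - ln 2) / ln kappa). exists (Rmax 1 M). intros a Ha.
  assert (Ha1 : 1 < a) by (generalize (Rmax_l 1 M); lra).
  assert (HaM : M < a) by (generalize (Rmax_r 1 M); lra).
  assert (Hia : 0 < / a <= 1).
  { split; [apply Rinv_0_lt_compat; lra|]. rewrite <- Rinv_1. apply Rinv_le_contravar; lra. }
  assert (HE : LG_ratio (ln kappa) (1 + / a) < ln eps).
  { rewrite LG_ratio_inv by lra.
    assert (a * LG (1 + / a) <= ln 2).
    { apply Rle_trans with (a * (/ a * ln 2)).
      - apply Rmult_le_compat_l; [lra|]. apply LG_1p_le_ln2; auto.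
      - right; field; lra. }
    assert (ln eps - ln 2 = M * ln kappa) by (unfold M; field; lra).
    nra. }
  rewrite g_as_ratio by lra.
  destruct (gumbel_cdf_bounds (LG_ratio (ln kappa) (1 + / a))) as [G0 G1].
  assert (exp (LG_ratio (ln kappa) (1 + / a)) < eps)
    by (rewrite <- (exp_ln eps) by auto; apply exp_increasing; auto).
  rewrite Rminus_0_r, Rabs_right; lra.
Qed.

(* For kappa = 1 the exponent is alpha LG (1 + 1/alpha) -> -gamma ... *)
Lemma is_lim_g_1 : is_lim (g 1) p_infty (1 - exp (- exp (- euler_gamma))).
Proof.
  assert (Hc : continuous gumbel_cdf (- euler_gamma)).
  { apply (ex_derive_continuous (K:=R_AbsRing) (V:=R_NormedModule)).
    unfold gumbel_cdf. auto_derive. auto. }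
  apply (is_lim_ext_loc (fun a => gumbel_cdf (a * LG (1 + / a)))).
  - exists 0. intros a Ha.
    rewrite g_as_ratio, LG_ratio_inv, ln_1 by lra. f_equal. ring.
  - exact (is_lim_comp_continuous _ gumbel_cdf _ _ is_lim_scaled_LG Hc).
Qed.

(* ... from above, since LG (1 + x) >= -gamma x. *)
Lemma g_1_ge alpha : 0 < alpha -> 1 - exp (- exp (- euler_gamma)) <= g 1 alpha.
Proof.
  intros Ha. assert (Hia : 0 < / alpha) by (apply Rinv_0_lt_compat; auto).
  rewrite g_as_ratio, LG_ratio_inv, ln_1 by lra.
  apply gumbel_cdf_le_compat.
  assert (H := LG_1p_ge (/ alpha) Hia).
  apply (Rmult_le_compat_l alpha) in H; [|lra].
  replace (alpha * (- euler_gamma * / alpha)) with (- euler_gamma) in H by (field; lra).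
  lra.
Qed.

Theorem proposition2p1 (kappa : R) (hk : 0 < kappa) :
  (kappa <= 1 ->
     let L := if Rlt_dec kappa 1 then 0 else 1 - exp (- exp (- euler_gamma)) in
     is_glb_Rbar (fun y => exists alpha, 0 < alpha /\ y = g kappa alpha) (Finite L)
     /\ is_lim (g kappa) p_infty (Finite L))
  /\
  (1 < kappa ->
     (exists! x0 : R, 1 < x0 /\ phi kappa x0 = 0)
     /\ forall x0 : R, 1 < x0 -> phi kappa x0 = 0 ->
          forall alpha : R, 0 < alpha -> g kappa (/ (x0 - 1)) <= g kappa alpha).
Proof.
  split.
  - intros Hk1 L. unfold L. destruct (Rlt_dec kappa 1) as [Hlt|Hge].
    + assert (Hlim := is_lim_g_lt_1 kappa (conj hk Hlt)).
      split; auto. apply is_glb_of_bound_and_limit; auto. intros; apply g_nonneg; auto.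
    + replace kappa with 1 by lra.
      split; [apply is_glb_of_bound_and_limit|]; auto using g_1_ge, is_lim_g_1.
  - intros Hk1. assert (Hc : 0 < ln kappa) by (rewrite <- ln_1; apply ln_increasing; lra).
    split.
    + destruct (ratio_critical_exists _ Hc) as [x0 [Hx0 Z0]].
      exists x0. split; [rewrite phi_eq by lra; auto|].
      intros y [Hy Zy]. rewrite phi_eq in Zy by lra.
      apply (ratio_critical_unique (ln kappa)); auto.
    + intros x0 Hx0 Z0 alpha Ha. rewrite phi_eq in Z0 by lra.
      assert (Hia : 0 < / alpha) by (apply Rinv_0_lt_compat; auto).
      rewrite !g_as_ratio by (auto; apply Rinv_0_lt_compat; lra).
      rewrite Rinv_inv. replace (1 + (x0 - 1)) with x0 by ring.
      apply gumbel_cdf_le_compat, LG_ratio_min; auto. lra.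
Qed.
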